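(* If a queuing regime $R=(\mathcal{X},\alpha,\xi,(\rho_i)_i,\pi)$ is universally optimal, then there exists a non-idle state $x$ at which preemption occurs, i.e., $\pi(x)=1$.
   Context: Model: an M/M/1 queue with a single server; customers arrive according to a Poisson process with rate $\lambda>0$ and are served at exponential rate $\mu>0$. Each customer incurs cost at rate $c>0$ while in the system and receives reward $r>0$ upon service completion; a customer who reneges gets no reward. Queuing regime: a tuple $(\mathcal{X},\alpha,\xi,(\rho_i)_i,\pi)$ where $\mathcal{X}=\mathcal{X}_0\uplus\mathcal{X}_1\uplus\cdots$ is a set of states partitioned by the number of customers in the system ($\mathcal{X}_0$ is a singleton, the idle state), and $n(x)=n$ for $x\in\mathcal{X}_n$. Customers present are ranked in a queue: position $1$ is being served (work-conserving) and position $n$ is last. If at state $x\in\mathcal{X}_n$ a customer arrives, the arriving customer is placed at position $\pi(x)\in\{1,\dots,n+1\}$ and the state becomes $\alpha(x)\in\mathcal{X}_{n+1}$. If at $x\in\mathcal{X}_n$, $n\ge1$, service is completed, the state becomes $\xi(x)\in\mathcal{X}_{n-1}$. If at $x\in\mathcal{X}_n$ the customer at position $i$ reneges, the state becomes $\rho_i(x)\in\mathcal{X}_{n-1}$. Events do not change the relative order of remaining customers, and $\rho_i(\rho_j(x))=\rho_{j-1}(\rho_i(x))$ for $i<j$, so simultaneous reneging of a set of positions is well defined. Strategies and equilibrium: a Markov strategy profile is a function $\sigma$ on non-idle states with $\sigma(x)\subseteq\{1,\dots,n(x)\}$, the positions of customers who renege simultaneously when the system reaches $x$. It is a Markov perfect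 equilibrium if for every state $x$ it is a Nash equilibrium of the game starting at $x$ in which each customer decides whether to stay or renege. Social optimum: the designer maximizes long-run average welfare (reward $r$ per service minus cost $c$ per unit time per customer present); the optimal policy keeps at most $n^*(\lambda,\mu,c,r)$ customers. A profile $\sigma$ induces the socially optimal behavior if $|\sigma(x)|=\max(n(x)-n^*,0)$ for all non-idle $x$. A regime is universally optimal if for every parameters $(\lambda,\mu,c,r)$ the game admits a Markov perfect equilibrium inducing the socially optimal behavior. *)

From mathcomp Require Import all_boot all_order all_algebra.
From mathcomp Require Import classical_sets reals constructive_ereal ereal.
Set Implicit Arguments.
Unset Strict Implicit.
Unset Printing Implicit Defensive.
Import Order.TTheory GRing.Theory Num.Theory.
Local Open Scope ring_scope.

(* nst x = n(x) is the number of customers in state x, i.e. x \in     *)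
(* X_{nst x}.  Positions are the naturals 1..nst x (1 = in service).   *)
(* The maps are total on X; their values are only constrained where   *)
(* the paper defines them.                                            *)
Record regime (X : Type) := Regime {
  nst   : X -> nat;
  idle  : X;
  alpha : X -> X;             (* arrival *)
  xi    : X -> X;             (* service completion *)
  rho   : nat -> X -> X;      (* rho i : reneging of position i *)
  pi_pos : X -> nat;           (* position of an arriving customer *)
  idle_n0   : nst idle = 0%N;
  idle_uniq : forall x, nst x = 0%N -> x = idle;
  alpha_n   : forall x, nst (alpha x) = (nst x).+1;
  xi_n      : forall x, (0 < nst x)%N -> nst (xi x) = (nst x).-1;
  rho_n     : forall x i, (1 <= i <= nst x)%N -> nst (rho i x) = (nst x).-1;
  pi_range  : forall x, (1 <= pi_pos x <= (nst x).+1)%N;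
  rho_comm  : forall x i j, (1 <= i)%N -> (i < j)%N -> (j <= nst x)%N ->
                rho i (rho j x) = rho j.-1 (rho i x)
}.

Section Game.
Variables (R : realType) (X : Type) (Q : regime X).

(* A (Markov) strategy profile: sigma x j = "the customer at position j
   reneges when the system reaches x".                                 *)
Definition profile := X -> nat -> bool.

Definition valid_profile (sigma : profile) : Prop :=
  forall x j, sigma x j -> (1 <= j <= nst Q x)%N.

(* simultaneous reneging of the set S of positions (largest first) *)
Definition rho_set (S : nat -> bool) (x : X) : X :=
  foldr (fun j y => if S j then rho Q j y else y) x (iota 1 (nst Q x)).

Definition nonempty_at (S : nat -> bool) (x : X) : bool :=
  has S (iota 1 (nst Q x)).

(* new position of the customer at position p after the positions in S
   (other than p) have reneged *)
Definition pos_after (S : nat -> bool) (p : nat) : nat :=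
  (p - count S (iota 1 p.-1))%N.

Definition pos_arrival (x : X) (p : nat) : nat :=
  if (pi_pos Q x <= p)%N then p.+1 else p.

Variables (lam mu : R).

(* Embedded jump chain of a tagged customer when everybody follows sigma.
   Nodes: (true, x, p)  = the system has just reached x, the tagged
                          customer is at position p, reneging sigma x
                          is about to take place;
          (false, x, p) = the system sojourns in x (no reneging), the
                          tagged customer is at position p; the sojourn
                          lasts Exp(lam+mu) and ends with an arrival
                          (prob. lam/(lam+mu)) or a service completion.
   horizon k b x p = (probability that the tagged customer is served
   within k steps, expected number of sojourns within k steps).       *)
Fixpoint horizon (sigma : profile) (k : nat) (b : bool) (x : X) (p : nat)
    : R * R :=
  match k with
  | 0%N => (0, 0)
  | k'.+1 =>
    if b then
      if sigma x p then (0, 0)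
      else if nonempty_at (sigma x) x then
        horizon sigma k' true (rho_set (sigma x) x) (pos_after (sigma x) p)
      else horizon sigma k' false x p
    else
      let a := lam / (lam + mu) in
      let s := mu / (lam + mu) in
      let A := horizon sigma k' true (alpha Q x) (pos_arrival x p) in
      let B := if p == 1%N then (1, 0)
               else horizon sigma k' true (xi Q x) p.-1 in
      (a * A.1 + s * B.1, 1 + a * A.2 + s * B.2)
  end.

Local Open Scope ereal_scope.

Definition prob_served (sigma : profile) b x p : \bar R :=
  ereal_sup [set ((horizon sigma k b x p).1)%:E | k in [set: nat]].
Definition exp_sojourns (sigma : profile) b x p : \bar R :=
  ereal_sup [set ((horizon sigma k b x p).2)%:E | k in [set: nat]].

(* expected utility of the tagged customer: r * P(served) - c * E[time in
   system], where each sojourn lasts 1/(lam+mu) in expectation *)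
Definition value (c r : R) (sigma : profile) b x p : \bar R :=
  r%:E * prob_served sigma b x p
  - (c / (lam + mu))%:E * exp_sojourns sigma b x p.

(* The game starting at the non-idle state x: the customer at position i
   stays or reneges, the others play sigma x, and sigma is followed
   afterwards.  Reneging yields 0. *)
Definition stay_value (c r : R) (sigma : profile) (x : X) (i : nat) : \bar R :=
  let S := fun j => sigma x j && (j != i) in
  if nonempty_at S x then value c r sigma true (rho_set S x) (pos_after S i)
  else value c r sigma false x i.

Definition nash_at (c r : R) (sigma : profile) (x : X) : Prop :=
  forall i, (1 <= i <= nst Q x)%N ->
    (sigma x i -> stay_value c r sigma x i <= 0) /\
    (~~ sigma x i -> 0 <= stay_value c r sigma x i).

Definition MPE (c r : R) (sigma : profile) : Prop :=
  valid_profile sigma /\ forall x, (0 < nst Q x)%N -> nash_at c r sigma x.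

End Game.

(* Social optimum: long-run average welfare of the M/M/1 queue that    *)
(* keeps at most n customers:  r * mu * P(N >= 1) - c * E[N], with     *)
(* stationary distribution P(N = k) proportional to (lam/mu)^k,        *)
(* k = 0..n.                                                           *)
Definition welfare (R : realType) (lam mu c r : R) (n : nat) : R :=
  let q := lam / mu in
  (r * mu * (\sum_(1 <= k < n.+1) q ^+ k)
   - c * (\sum_(0 <= k < n.+1) k%:R * q ^+ k))
  / (\sum_(0 <= k < n.+1) q ^+ k).

Definition is_nstar (R : realType) (lam mu c r : R) (N : nat) : Prop :=
  (forall m, welfare lam mu c r m <= welfare lam mu c r N) /\
  (forall m, (forall m', welfare lam mu c r m' <= welfare lam mu c r m) ->
     (m <= N)%N).

Definition induces_social_opt (X : Type) (Q : regime X) (sigma : profile X)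
    (N : nat) : Prop :=
  forall x, (0 < nst Q x)%N ->
    count (sigma x) (iota 1 (nst Q x)) = (nst Q x - N)%N.

Definition universally_optimal (R : realType) (X : Type) (Q : regime X)
    : Prop :=
  forall lam mu c r : R, 0 < lam -> 0 < mu -> 0 < c -> 0 < r ->
  forall N, is_nstar lam mu c r N ->
  exists sigma : profile X,
    MPE Q lam mu c r sigma /\ induces_social_opt Q sigma N.

From mathcomp Require Import all_boot all_order all_algebra.
From mathcomp Require Import classical_sets reals constructive_ereal ereal.
From mathcomp Require Import ring lra zify.
Set Implicit Arguments.
Unset Strict Implicit.
Unset Printing Implicit Defensive.
Import Order.TTheory GRing.Theory Num.Theory.
Local Open Scope ring_scope.
Local Open Scope classical_set_scope.

(* Take lam = mu = 1, c = 2 and r = 5, for which n* = 1, and suppose that an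
   arrival never preempts, so that a customer in service stays in service
   until he leaves.  In an equilibrium inducing the optimum, one of two
   customers and two of three renege.  The customer in service at two
   customers does not renege: staying, he is served during the current
   sojourn with probability 1/2 and otherwise continues from a position of
   nonnegative value.  So the newcomer reneges, and a customer alone in
   service is served with probability 1 after 2 sojourns on average, which
   is worth 5 - 2 > 0; this keeps the customer in service at three customers
   too.  But then the newcomer at two customers would gain by staying: he
   reneges if another customer arrives first, and otherwise becomes alone in
   service, which is worth 5/2 - (1 + 1) > 0. *)

Section SequenceSup.
Variables (R : realType) (f : nat -> R).

Lemma le_sup_range M k : (forall n, f n <= M) -> f k <= sup (range f).
Proof.
move=> fM; apply: ub_le_sup; last by exists k.
by exists M => _ [n _ <-].
Qed.

Lemma sup_range_le M : (forall n, f n <= M) -> sup (range f) <= M.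
Proof. by move=> fM; apply: ge_sup; [exists (f 0%N), 0%N | move=> _ [n _ <-]]. Qed.

Lemma ereal_sup_range M : (forall n, f n <= M) ->
  ereal_sup [set (f n)%:E | n in [set: nat]] = (sup (range f))%:E.
Proof.
move=> fM; rewrite -(image_comp f EFin); apply: ereal_sup_EFin.
  by exists M => _ [n _ <-].
by exists (f 0%N), 0%N.
Qed.

Lemma ereal_sup_range_shift : f 0%N <= f 1%N ->
  ereal_sup [set (f n)%:E | n in [set: nat]] =
  ereal_sup [set (f n.+1)%:E | n in [set: nat]].
Proof.
move=> f01; apply/eqP; rewrite eq_le; apply/andP; split.
  apply: ge_ereal_sup => _ [[|n] _ <-].
    apply: (@le_trans _ _ (f 1%N)%:E); first by rewrite lee_fin.
    by apply: ereal_sup_ubound; exists 0%N.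
  by apply: ereal_sup_ubound; exists n.
by apply: ge_ereal_sup => _ [n _ <-]; apply: ereal_sup_ubound; exists n.+1.
Qed.

End SequenceSup.

Section Values.
Variables (R : realType) (X : Type) (Q : regime X) (lam mu c r : R).
Variable sigma : profile X.
Hypotheses (lam_gt0 : 0 < lam) (mu_gt0 : 0 < mu) (c_gt0 : 0 < c) (r_gt0 : 0 < r).

Local Notation h := (horizon Q lam mu sigma).
Local Notation served b x p := (fun k => (h k b x p).1).
Local Notation sojourns b x p := (fun k => (h k b x p).2).

Lemma horizon_bounds k b x p :
  0 <= (h k b x p).1 <= 1 /\ 0 <= (h k b x p).2 <= k%:R.
Proof.
have [a_ge0 s_ge0 as1] : [/\ 0 <= lam / (lam + mu), 0 <= mu / (lam + mu)
    & lam / (lam + mu) + mu / (lam + mu) = 1].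
  have lm_gt0 : 0 < lam + mu by rewrite addr_gt0.
  by rewrite !divr_ge0 ?ltW// -mulrDl divff// gt_eqF.
elim: k b x p => [|k IH] [] x p /=; rewrite ?lexx ?ler01 //.
  case: (sigma x p); first by rewrite !lexx ler01 ler0n.
  suff IHS b' x' p' : 0 <= (h k b' x' p').1 <= 1 /\ 0 <= (h k b' x' p').2 <= k.+1%:R.
    by case: ifP.
  case: (IH b' x' p') => -> /andP[-> Ek]; split=> //.
  by apply: le_trans Ek _; rewrite ler_nat.
set a := lam / (lam + mu) in a_ge0 as1 *; set s := mu / (lam + mu) in s_ge0 as1 *.
have [/andP[A1 A2] /andP[A3 A4]] := IH true (alpha Q x) (pos_arrival Q x p).
have [/andP[B1 B2] /andP[B3 B4]] :
    0 <= (if p == 1%N then (1, 0) else h k true (xi Q x) p.-1).1 <= 1 /\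
    0 <= (if p == 1%N then (1, 0) else h k true (xi Q x) p.-1).2 <= k%:R.
  by case: (p == 1%N) => /=; rewrite ?ler01 ?lexx ?ler0n; last exact: IH.
move: (h k _ _ _) (if _ then _ else _) A1 A2 A3 A4 B1 B2 B3 B4 => [? ?] [? ?] /= *.
rewrite -natr1; split; apply/andP; split; nra.
Qed.

Lemma horizon_others_renege k x p : ~~ sigma x p -> nonempty_at Q (sigma x) x ->
  h k.+1 true x p = h k true (rho_set Q (sigma x) x) (pos_after (sigma x) p).
Proof. by move=> /negbTE /= -> ->. Qed.

Lemma prob_servedE b x p :
  prob_served Q lam mu sigma b x p = (sup (range (served b x p)))%:E.
Proof.
by apply: (ereal_sup_range (M := 1)) => k; case: (horizon_bounds k b x p) => /andP[].
Qed.

Lemma valueE b x p M : (forall k, (h k b x p).2 <= M) ->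
  value Q lam mu c r sigma b x p =
  (r * sup (range (served b x p))
   - c / (lam + mu) * sup (range (sojourns b x p)))%:E.
Proof.
by move=> EM; rewrite /value prob_servedE /exp_sojourns (ereal_sup_range EM) -!EFinM -EFinB.
Qed.

Lemma value_ge0_sojourns_bounded b x p : (0 <= value Q lam mu c r sigma b x p)%E ->
  exists M, forall k, (h k b x p).2 <= M.
Proof.
rewrite /value prob_servedE /exp_sojourns.
have ub k : ((h k b x p).2%:E <= ereal_sup [set (h k b x p).2%:E | k in [set: nat]])%E.
  by apply: ereal_sup_ubound; exists k.
move: (ereal_sup _) ub => [e ub _ | _ | /(_ 0%N) //].
  by exists e => k; rewrite -lee_fin.
by rewrite gt0_muley ?lte_fin ?divr_gt0 ?addr_gt0 // -EFinM.
Qed.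

Lemma value_gt0 b x p K pl eu : pl <= (h K b x p).1 ->
  (forall k, (h k b x p).2 <= eu) -> c / (lam + mu) * eu < r * pl ->
  (0 < value Q lam mu c r sigma b x p)%E.
Proof.
move=> plK Eeu ineq; rewrite (valueE Eeu) lte_fin subr_gt0.
have P_le1 k : (h k b x p).1 <= 1 by case: (horizon_bounds k b x p) => /andP[].
apply: le_lt_trans (lt_le_trans ineq _).
  by apply: ler_wpM2l; [rewrite divr_ge0 ?ltW ?addr_gt0 | exact: sup_range_le].
by apply: ler_wpM2l; [exact: ltW | exact: le_trans plK (le_sup_range K P_le1)].
Qed.

Lemma value_stay x p : ~~ sigma x p ->
  value Q lam mu c r sigma true x p = stay_value Q lam mu c r sigma x p.
Proof.
move=> stays; rewrite /stay_value /=.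
have -> : (fun j => sigma x j && (j != p)) = sigma x.
  apply: boolp.funext => j.
  by case: (eqVneq j p) => [->|]; rewrite ?andbT ?andbF ?(negbTE stays).
have [/andP[P1 _] /andP[E1 _]] := horizon_bounds 1 true x p.
rewrite /value /prob_served /exp_sojourns.
rewrite (ereal_sup_range_shift (f := fun k => (h k true x p).1)) //.
rewrite (ereal_sup_range_shift (f := fun k => (h k true x p).2)) //=.
by rewrite (negbTE stays); case: ifP.
Qed.

End Values.

Section UnitRatesWelfare.
Variable R : realType.

Lemma welfare_unit_rates m :
  welfare (1 : R) 1 2 5 m = m%:R * (4 - m%:R) / (m%:R + 1).
Proof.
have gauss : 2 * \sum_(0 <= k < m.+1) (k%:R : R) = m%:R * (m%:R + 1).
  elim: m => [|m IH]; first by rewrite big_nat1 mulr0 mul0r.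
  by rewrite big_nat_recr //= mulrDr IH -natr1; lra.
rewrite /welfare divr1.
under eq_bigr do rewrite expr1n.
under [X in _ / X]eq_bigr do rewrite expr1n.
under [X in _ - _ * X]eq_bigr do rewrite expr1n mulr1.
rewrite !sumr_const_nat subn1 subn0 -natr1 /=.
by congr (_ / _); lra.
Qed.

Lemma welfare_unit_rates_lt m : (1 < m)%N -> welfare (1 : R) 1 2 5 m < 3 / 2.
Proof.
move=> m_gt1; rewrite welfare_unit_rates ltr_pdivrMr ?ltr_wpDl //.
have : 2 <= m%:R :> R by rewrite ler_nat.
by move: m%:R => x; nra.
Qed.

Lemma welfare_unit_rates_le m : welfare (1 : R) 1 2 5 m <= 3 / 2.
Proof.
case: (ltnP 1 m) => [/welfare_unit_rates_lt/ltW // | m_le1].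
rewrite welfare_unit_rates ler_pdivrMr ?ltr_wpDl //.
by case: m m_le1 => [|[|]] //= _; lra.
Qed.

Lemma nstar_unit_rates : is_nstar (1 : R) 1 2 5 1.
Proof.
have W1 : welfare (1 : R) 1 2 5 1 = 3 / 2 by rewrite welfare_unit_rates; field.
split=> [m | m m_max]; first by rewrite W1 welfare_unit_rates_le.
rewrite leqNgt; apply/negP => /welfare_unit_rates_lt.
by rewrite -W1 ltNge m_max.
Qed.

End UnitRatesWelfare.

Section UnitRates.
Variables (R : realType) (X : Type) (Q : regime X) (sigma : profile X).
Hypothesis no_preemption : forall x, (0 < nst Q x)%N -> pi_pos Q x != 1%N.
Hypothesis sigma_nash : forall x, (0 < nst Q x)%N -> nash_at Q (1 : R) 1 2 5 sigma x.
Hypothesis sigma_opt : induces_social_opt Q sigma 1.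

Local Notation h := (horizon Q (1 : R) 1 sigma).
Local Notation V := (value Q (1 : R) 1 2 5 sigma).

Let unit_cost : (2 : R) / (1 + 1) = 1. Proof. by rewrite divff. Qed.
Let unit_bounds := horizon_bounds Q sigma (@ltr01 R) (@ltr01 R).

Lemma pos_arrival_head x : (0 < nst Q x)%N -> pos_arrival Q x 1 = 1%N.
Proof.
move=> /no_preemption; rewrite /pos_arrival.
by have := pi_range Q x; case: (pi_pos Q x) => [|[|n]].
Qed.

Lemma horizon_single_stay y k : nst Q y = 1%N -> h k.+1 true y 1 = h k false y 1.
Proof.
move=> y1; have := @sigma_opt y; rewrite /= /nonempty_at y1 => /(_ isT) /=.
by case: (sigma y 1%N).
Qed.

Lemma horizon_sojourn_head x k : (0 < nst Q x)%N ->
  h k.+1 false x 1 = (2^-1 * (h k true (alpha Q x) 1).1 + 2^-1,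
                      1 + 2^-1 * (h k true (alpha Q x) 1).2).
Proof. by move=> x_gt0; rewrite /= pos_arrival_head // mul1r mulr1 mulr0 addr0. Qed.

Lemma value_true_ge0 x p : (1 <= p <= nst Q x)%N -> (0 <= V true x p)%E.
Proof.
move=> p_range; case sxp: (sigma x p); last first.
  rewrite (value_stay _ _ _ ltr01 ltr01) ?sxp //.
  by apply: (sigma_nash _ p_range).2; [lia | rewrite sxp].
have h0 k : h k true x p = (0, 0) by case: k => //= k; rewrite sxp.
have E0 k : (h k true x p).2 <= 0 by rewrite h0.
rewrite (valueE _ _ ltr01 ltr01 E0) lee_fin subr_ge0 unit_cost mul1r.
have P0 k : (h k true x p).1 <= 0 by rewrite h0.
apply: (@le_trans _ _ 0); first exact: sup_range_le E0.
by apply: mulr_ge0 => //; apply: le_trans (le_sup_range 0 P0); rewrite h0.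
Qed.

Lemma pair_head_stays w : nst Q w = 2%N -> sigma w 1%N = false.
Proof.
move=> w2; apply/negP => reneges.
have tail_stays : sigma w 2%N = false.
  by have := @sigma_opt w; rewrite w2 /= reneges => /(_ isT); case: (sigma w 2%N).
have w_gt0 : (0 < nst Q w)%N by rewrite w2.
have head : (1 <= 1 <= nst Q w)%N by rewrite w2.
have := (sigma_nash w_gt0 head).1 reneges.
rewrite /stay_value /nonempty_at w2 /= reneges tail_stays /=; apply/negP; rewrite -ltNge.
have aw3 : (1 <= 1 <= nst Q (alpha Q w))%N by rewrite alpha_n w2.
have [M AM] := value_ge0_sojourns_bounded ltr01 ltr01 (ltr0Sn _ 1) (value_true_ge0 aw3).
have := value_true_ge0 aw3; rewrite (valueE _ _ ltr01 ltr01 AM) lee_fin unit_cost mul1r.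
set pA := sup _; set eA := sup _ => A_ge0.
have eA_ge0 : 0 <= eA by exact: le_trans (le_sup_range 0 AM).
have Ew k : (h k false w 1).2 <= 1 + 2^-1 * eA.
  case: k => [|k]; first by rewrite /=; lra.
  have : (h k true (alpha Q w) 1).2 <= eA := le_sup_range k AM.
  by rewrite horizon_sojourn_head ?w2 //=; lra.
(* Staying is worth at least 5 (pA + 1) / 2 - (1 + eA / 2) >= 3 / 2. *)
rewrite (valueE _ _ ltr01 ltr01 Ew) lte_fin unit_cost mul1r.
set pw := sup _; set ew := sup _.
have Pw_le1 k : (h k false w 1).1 <= 1 by case: (unit_bounds k false w 1) => /andP[].
have pA_le : pA <= 2 * pw - 1.
  apply: sup_range_le => k.
  have : (h k.+1 false w 1).1 <= pw := le_sup_range k.+1 Pw_le1.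
  by rewrite horizon_sojourn_head ?w2 //=; lra.
have : ew <= 1 + 2^-1 * eA := sup_range_le Ew.
lra.
Qed.

Lemma pair_tail_reneges w : nst Q w = 2%N -> sigma w 2%N.
Proof.
move=> w2; have := @sigma_opt w; rewrite w2 /= pair_head_stays // => /(_ isT).
by case: (sigma w 2%N).
Qed.

Lemma horizon_pair_head w : nst Q w = 2%N ->
  exists2 y, nst Q y = 1%N & forall k, h k.+2 true w 1 = h k false y 1.
Proof.
move=> w2; exists (rho Q 2 w); first by rewrite rho_n w2.
have head := pair_head_stays w2; have tail := pair_tail_reneges w2.
have others : nonempty_at Q (sigma w) w by rewrite /nonempty_at w2 /= tail orbT.
have rs : rho_set Q (sigma w) w = rho Q 2 w by rewrite /rho_set w2 /= head tail.
by move=> k; rewrite horizon_others_renege ?head // rs horizon_single_stay // rho_n w2.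
Qed.

Lemma horizon_single_cycle y : nst Q y = 1%N ->
  exists2 y', nst Q y' = 1%N & forall k,
  h k.+3 false y 1 = (2^-1 * (h k false y' 1).1 + 2^-1, 1 + 2^-1 * (h k false y' 1).2).
Proof.
move=> y1; have a2 : nst Q (alpha Q y) = 2%N by rewrite alpha_n y1.
have [y' y'1 pair] := horizon_pair_head a2.
by exists y' => // k; rewrite horizon_sojourn_head ?y1 // pair.
Qed.

Lemma sojourns_le_2 k b x p : (k <= 2)%N -> (h k b x p).2 <= 2.
Proof.
have [_ /andP[_ Ek]] := unit_bounds k b x p.
by move=> k_le2; apply: le_trans Ek _; rewrite ler_nat.
Qed.

Lemma sojourns_single_le2 k y : nst Q y = 1%N -> (h k false y 1).2 <= 2.
Proof.
elim/ltn_ind: k y => k IH y y1.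
case: (ltnP k 3) => [k_lt3 | k_ge3]; first exact: sojourns_le_2.
rewrite -(subnK k_ge3) addn3.
have [y' y'1 ->] := horizon_single_cycle y1.
by have := IH (k - 3)%N (ltac:(lia)) y' y'1; rewrite /=; lra.
Qed.

Lemma served_single_ge n y : nst Q y = 1%N -> 1 - 2^-1 ^+ n <= (h (3 * n) false y 1).1.
Proof.
elim: n y => [|n IH] y y1.
  by rewrite expr0 subrr; case: (unit_bounds 0 false y 1) => /andP[].
rewrite mulnSr addn3; have [y' y'1 ->] := horizon_single_cycle y1.
by rewrite /= exprS; have := IH y' y'1; lra.
Qed.

Lemma pair_head_value_gt0 y : nst Q y = 2%N -> (0 < V true y 1)%E.
Proof.
move=> y2; have [y' y'1 pair] := horizon_pair_head y2.
apply: (value_gt0 ltr01 ltr01 (ltr0Sn _ 1) (ltr0Sn _ 4)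
  (K := (3 * 3).+2) (pl := 7 / 8) (eu := 2)).
- by rewrite pair; have := served_single_ge 3 y'1; rewrite !exprS expr0; lra.
- case=> [|[|k]]; try exact: sojourns_le_2.
  by rewrite pair sojourns_single_le2.
- by rewrite unit_cost; lra.
Qed.

Lemma triple_head_stays w : nst Q w = 3%N -> sigma w 1%N = false.
Proof.
move=> w3; apply/negP => reneges.
have w_gt0 : (0 < nst Q w)%N by rewrite w3.
have head : (1 <= 1 <= nst Q w)%N by rewrite w3.
have := (sigma_nash w_gt0 head).1 reneges; apply/negP; rewrite -ltNge.
have := @sigma_opt w; rewrite w3 /= reneges => /(_ isT).
rewrite /stay_value /nonempty_at /rho_set w3 /= reneges.
by case: (sigma w 2%N); case: (sigma w 3%N) => //= _;
  apply: pair_head_value_gt0; rewrite rho_n w3.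
Qed.

Lemma triple_tail_reneges w : nst Q w = 3%N -> sigma w 2%N && sigma w 3%N.
Proof.
move=> w3; have := @sigma_opt w; rewrite w3 /= triple_head_stays // => /(_ isT).
by case: (sigma w 2%N); case: (sigma w 3%N).
Qed.

Lemma pair_tail_value_gt0 z : nst Q z = 2%N -> (0 < V false z 2)%E.
Proof.
move=> z2; have z1 : nst Q (xi Q z) = 1%N by rewrite xi_n z2.
have az3 : nst Q (alpha Q z) = 3%N by rewrite alpha_n z2.
have /andP[tail2 tail3] := triple_tail_reneges az3.
have renege k : h k true (alpha Q z) (pos_arrival Q z 2) = (0, 0).
  case: k => //= k; rewrite /pos_arrival.
  by case: (pi_pos Q z <= 2)%N; rewrite ?tail2 ?tail3.
have step k : h k.+1 false z 2 =
    (2^-1 * (h k true (xi Q z) 1).1, 1 + 2^-1 * (h k true (xi Q z) 1).2).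
  by rewrite /= renege /= mul1r mulr0 add0r addr0.
apply: (value_gt0 ltr01 ltr01 (ltr0Sn _ 1) (ltr0Sn _ 4)
  (K := (3 * 3).+2) (pl := 7 / 16) (eu := 2)).
- rewrite step horizon_single_stay //.
  have := served_single_ge 3 z1; rewrite !exprS expr0.
  by move: (h (3 * 3) _ _ _) => P /=; lra.
- case=> [|[|k]]; first exact: sojourns_le_2.
    by rewrite step /=; lra.
  by rewrite step horizon_single_stay //=; have := sojourns_single_le2 k z1; lra.
- by rewrite unit_cost; lra.
Qed.

Lemma unit_rates_absurd : False.
Proof.
pose z := alpha Q (alpha Q (idle Q)).
have z2 : nst Q z = 2%N by rewrite !alpha_n idle_n0.
have z_gt0 : (0 < nst Q z)%N by rewrite z2.
have tail : (1 <= 2 <= nst Q z)%N by rewrite z2.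
have := (sigma_nash z_gt0 tail).1 (pair_tail_reneges z2); apply/negP; rewrite -ltNge.
rewrite /stay_value /nonempty_at z2 /= pair_head_stays //=.
by rewrite andbF; exact: pair_tail_value_gt0.
Qed.

End UnitRates.

Theorem corollary1 (R : realType) (X : Type) (Reg : regime X) :
  universally_optimal R Reg ->
  exists x : X, (0 < nst Reg x)%N /\ pi_pos Reg x = 1%N.
Proof.
move=> optimal; apply: boolp.contrapT => preemption_free.
have no_preemption x : (0 < nst Reg x)%N -> pi_pos Reg x != 1%N.
  by move=> x_gt0; apply/eqP => pi1; apply: preemption_free; exists x.
have [sigma [[_ nash] opt]] :=
  optimal 1 1 2 5 ltr01 ltr01 (ltr0Sn _ 1) (ltr0Sn _ 4) 1%N (nstar_unit_rates R).
exact: unit_rates_absurd no_preemption nash opt.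
Qed.
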